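(* There exist ternary Euclidean LCD codes with parameters $[37,22,8]$ and $[40,29,6]$.
   Context: A ternary $[n,k,d]$ code is a $k$-dimensional subspace $C\subseteq\mathbb{F}_3^n$ with minimum nonzero Hamming weight $d$; it is Euclidean LCD if $C\cap C^{\perp_E}=\{0\}$, where $C^{\perp_E}$ is the dual with respect to $\langle x,y\rangle_E=\sum x_iy_i$. *)

From HB Require Import structures.
From mathcomp Require Import all_boot all_order all_algebra.
Set Implicit Arguments. Unset Strict Implicit. Unset Printing Implicit Defensive.
Import GRing.Theory.
Local Open Scope ring_scope.

Notation F3 := 'F_3.

Definition hwt (n : nat) (x : 'rV[F3]_n) : nat := #|[set i : 'I_n | x 0 i != 0]|.

Definition eip (n : nat) (x y : 'rV[F3]_n) : F3 := \sum_(i < n) x 0 i * y 0 i.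

(* The code generated by G : 'M_(k,n) is its row space C = {x | (x <= G)%MS}.
   It is a k-dimensional subspace iff G has full row rank (row_free G). *)
Definition in_code (k n : nat) (G : 'M[F3]_(k, n)) (x : 'rV[F3]_n) : bool :=
  (x <= G)%MS.

Definition ternary_code_params (n k d : nat) (G : 'M[F3]_(k, n)) : Prop :=
  [/\ \rank G = k,
      exists2 x, in_code G x & (x != 0) && (hwt x == d)
    & forall x, in_code G x -> x != 0 -> (d <= hwt x)%N].

Definition euclidean_LCD (k n : nat) (G : 'M[F3]_(k, n)) : Prop :=
  forall x : 'rV[F3]_n, in_code G x ->
    (forall c, in_code G c -> eip c x = 0) -> x = 0.
Arguments ternary_code_params n k d G : clear implicits.

From HB Require Import structures.
From mathcomp Require Import all_boot all_order all_algebra.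
From Stdlib Require Import String Ascii.
Set Implicit Arguments. Unset Strict Implicit. Unset Printing Implicit Defensive.
Import GRing.Theory.

(* A code C = <G> is Euclidean LCD as soon as its Gram matrix G G^T is
   invertible: if x = y G is orthogonal to C then y G G^T = 0, so y = 0.
   Invertibility, and with it rank G = k, is certified by an explicit inverse.
   For the minimum distance we use a matrix H with G H = 0, so C lies in the
   kernel of H, and show that every nonzero x with x H = 0 has weight at least
   2t + 2 by a meet-in-the-middle search.  Scale x so that its first nonzero
   coordinate, say j, is 1.  If wt x <= 2t + 1, the rest of x splits as a + b
   with wt a, wt b <= t, and h_j + a H = (-b) H, where h_j is row j of H.  So it
   suffices to check, for every j, that for no syndrome s of a word of weight
   at most t supported after j is h_j + s again such a syndrome.  These sets of
   syndromes are stored in ternary tries and built column by column from the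
   right. *)

Local Open Scope ring_scope.

Section GramCriterion.
Variables (F : fieldType) (k n : nat) (G : 'M[F]_(k, n)).
Hypothesis gram_unit : G *m G^T \in unitmx.

Lemma rank_gram_unit : \rank G = k.
Proof.
apply/eqP; rewrite eqn_leq rank_leq_row /=.
by rewrite -[X in (X <= _)%N](mxrank_unit gram_unit) mxrankM_maxl.
Qed.

Lemma gram_unit_orthogonal_eq0 m (x : 'M_(m, n)) :
  (x <= G)%MS -> x *m G^T = 0 -> x = 0.
Proof.
case/submxP=> y -> /(congr1 (mulmx^~ (invmx (G *m G^T)))).
by rewrite -mulmxA mulmxK // mul0mx => ->; rewrite mul0mx.
Qed.

End GramCriterion.

Lemma euclidean_LCD_gram_unit k n (G : 'M[F3]_(k, n)) :
  G *m G^T \in unitmx -> euclidean_LCD G.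
Proof.
move=> gram_unit x xG x_orth; apply: gram_unit_orthogonal_eq0 xG _ => //.
apply/matrixP=> i l; rewrite (ord1 i) !mxE -[RHS](x_orth _ (row_sub l G)).
by apply: eq_bigr => j _; rewrite !mxE mulrC.
Qed.

Lemma hwt0 n : hwt (0 : 'rV[F3]_n) = 0%N.
Proof. by apply/eqP; rewrite cards_eq0; apply/eqP/setP=> j; rewrite !inE mxE eqxx. Qed.

Lemma ternary_code_params_kernel n k r d (G : 'M[F3]_(k, n)) (H : 'M_(n, r)) i :
  \rank G = k -> G *m H = 0 -> hwt (row i G) = d -> (0 < d)%N ->
  (forall x, x *m H = 0 -> x != 0 -> (d <= hwt x)%N) ->
  ternary_code_params n k d G.
Proof.
move=> rankG GH0 wt_row d_gt0 kerH_wt; split=> //.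
  exists (row i G); first exact: row_sub.
  rewrite wt_row eqxx andbT; apply: contraTneq d_gt0 => row0.
  by rewrite -wt_row row0 hwt0.
by move=> x /submxP[y ->]; apply: kerH_wt; rewrite -mulmxA GH0 mulmx0.
Qed.

Local Close Scope ring_scope.

(* A computational copy of F_3: arithmetic in 'F_3 itself does not reduce
   efficiently under vm_compute. *)
Inductive t3 := A0 | A1 | A2.

Definition t3_eqb (a b : t3) : bool :=
  match a, b with A0, A0 | A1, A1 | A2, A2 => true | _, _ => false end.

Lemma t3_eqP : Equality.axiom t3_eqb.
Proof. by do 2 case; constructor. Qed.

HB.instance Definition _ := hasDecEq.Build t3 t3_eqP.

Definition add3 (a b : t3) : t3 :=
  match a, b with
  | A0, x | x, A0 => x
  | A1, A1 => A2
  | A2, A2 => A1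
  | _, _ => A0
  end.

Definition mul3 (a b : t3) : t3 :=
  match a, b with
  | A0, _ | _, A0 => A0
  | A1, x | x, A1 => x
  | A2, A2 => A1
  end.

Definition word := seq t3.

Fixpoint dot (u v : word) : t3 :=
  if (u, v) is (x :: u', y :: v') then add3 (mul3 x y) (dot u' v') else A0.

Fixpoint vadd (u v : word) : word :=
  if (u, v) is (x :: u', y :: v') then add3 x y :: vadd u' v' else [::].

Definition vscale (a : t3) (u : word) : word := map (mul3 a) u.

Definition wt (u : word) : nat := count (predC1 A0) u.

Fixpoint lincomb (r : nat) (z : word) (B : seq word) : word :=
  if (z, B) is (x :: z', b :: B') then vadd (vscale x b) (lincomb r z' B')
  else nseq r A0.

Definition column (j : nat) (B : seq word) : word := [seq nth A0 b j | b <- B].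

Definition all_size (r : nat) (B : seq word) : bool := all (fun b => size b == r) B.

Lemma size_vadd u v : size u = size v -> size (vadd u v) = size u.
Proof. by elim: u v => [|x u IH] [|y v] //= [/IH ->]. Qed.

Lemma nth_vadd u v j : size u = size v ->
  nth A0 (vadd u v) j = add3 (nth A0 u j) (nth A0 v j).
Proof. by elim: u v j => [|x u IH] [|y v] [|j] //= [/IH]. Qed.

Lemma nth_vscale a u j : nth A0 (vscale a u) j = mul3 a (nth A0 u j).
Proof.
case: (ltnP j (size u)) => [ju|uj]; first by rewrite (nth_map A0).
by rewrite !nth_default ?size_map //; case: a.
Qed.

Lemma vscale1 u : vscale A1 u = u.
Proof. by elim: u => //= x u ->; case: x. Qed.

Lemma wt_vscale a u : a != A0 -> wt (vscale a u) = wt u.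
Proof. by move=> a0; rewrite /wt count_map; apply: eq_count => x; case: a a0; case: x. Qed.

Lemma dot_vadd u v w : size u = size v ->
  dot (vadd u v) w = add3 (dot u w) (dot v w).
Proof.
elim: u v w => [|x u IH] [|y v] [|c w] //= [/IH ->].
by move: (dot u w) (dot v w) => p q; case: x; case: y; case: c; case: p; case: q.
Qed.

Lemma dot_vscale a u w : dot (vscale a u) w = mul3 a (dot u w).
Proof.
have a0 : mul3 a A0 = A0 by case: a.
elim: u w => [|x u IH] [|c w] //=; rewrite ?a0 // IH.
by move: (dot u w) => p; case: a {a0 IH}; case: x; case: c; case: p.
Qed.

Lemma size_lincomb r z B : all_size r B -> size (lincomb r z B) = r.
Proof.
elim: B z => [|b B IH] [|x z] /=; rewrite ?size_nseq // => /andP[/eqP br /IH Bz].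
by rewrite size_vadd size_map ?Bz.
Qed.

Lemma nth_lincomb r z B j : all_size r B -> size z = size B ->
  nth A0 (lincomb r z B) j = dot z (column j B).
Proof.
elim: B z => [|b B IH] [|x z] //=; first by rewrite nth_nseq if_same.
case/andP=> /eqP br rB [zB].
by rewrite nth_vadd ?size_map ?size_lincomb // nth_vscale IH.
Qed.

Lemma lincomb0_cons r z b B : size b = r -> all_size r B ->
  lincomb r (A0 :: z) (b :: B) = lincomb r z B.
Proof.
move=> br rB /=; apply: (@eq_from_nth _ A0) => [|j _].
  by rewrite size_vadd size_map ?size_lincomb.
by rewrite nth_vadd ?size_map ?size_lincomb // nth_vscale.
Qed.

(* With L := lincomb r _ cs: multiplying x c + L z = 0 by x gives
   c + L (x z) = 0, as x^2 = 1 for x != 0; then c + L a = - L b = L (2 b). *)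
Lemma lincomb_cons_eq0 r x c z a b cs : x != A0 -> size c = r -> all_size r cs ->
  size z = size cs -> size a = size z -> size b = size z -> vadd a b = vscale x z ->
  lincomb r (x :: z) (c :: cs) = nseq r A0 ->
  vadd c (lincomb r a cs) = lincomb r (vscale A2 b) cs.
Proof.
move=> x0 cr rcs zcs az bz abz /(congr1 (nth A0)) synd0.
have sz : size (lincomb r a cs) = r by rewrite size_lincomb.
apply: (@eq_from_nth _ A0) => [|j]; first by rewrite size_vadd ?size_lincomb ?sz.
rewrite size_vadd ?sz // cr => jr.
have := congr1 (dot^~ (column j cs)) abz; have := congr1 (@^~ j) synd0.
rewrite /= nth_vadd ?size_map ?size_lincomb // nth_vscale nth_nseq jr.
rewrite nth_vadd ?sz // !nth_lincomb ?size_map ?az ?bz ?zcs // dot_vadd ?az ?bz //.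
rewrite !dot_vscale; move: (nth A0 c j) (dot z _) (dot a _) (dot b _) => cj s p q.
by case: x x0 {abz synd0}; case: cj; case: s; case: p; case: q.
Qed.

Lemma wt_split z m1 m2 : wt z <= m1 + m2 -> exists a b,
  [/\ size a = size z, size b = size z, vadd a b = z, wt a <= m1 & wt b <= m2].
Proof.
elim: z m1 m2 => [|x z IH] m1 m2; first by exists [::], [::].
rewrite /wt /= -/(wt z); case: (eqVneq x A0) => [->|x0] wtz.
  have [a [b [az bz ab wa wb]]] := IH m1 m2 wtz.
  by exists (A0 :: a), (A0 :: b); rewrite /= az bz ab.
case: m1 wtz => [|m1] wtz.
  case: m2 wtz => [|m2] // wtz.
  have [a [b [az bz ab wa wb]]] := IH 0 m2 wtz.
  exists (A0 :: a), (x :: b); rewrite /wt /= az bz ab x0.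
  by split=> //; case: x x0.
have [a [b [az bz ab wa wb]]] := IH m1 m2 wtz.
exists (x :: a), (A0 :: b); rewrite /wt /= az bz ab x0.
by split=> //; case: x x0.
Qed.

Inductive trie := Leaf | Node of bool & trie & trie & trie.

Definition child (d : t3) (t0 t1 t2 : trie) : trie :=
  match d with A0 => t0 | A1 => t1 | A2 => t2 end.

Fixpoint tmem (t : trie) (k : word) : bool :=
  match t, k with
  | Leaf, _ => false
  | Node b _ _ _, [::] => b
  | Node _ t0 t1 t2, d :: k' => tmem (child d t0 t1 t2) k'
  end.

Fixpoint tins (t : trie) (k : word) : trie :=
  let: (b, t0, t1, t2) :=
    if t is Node b t0 t1 t2 then (b, t0, t1, t2) else (false, Leaf, Leaf, Leaf) in
  match k with
  | [::] => Node true t0 t1 t2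
  | A0 :: k' => Node b (tins t0 k') t1 t2
  | A1 :: k' => Node b t0 (tins t1 k') t2
  | A2 :: k' => Node b t0 t1 (tins t2 k')
  end.

Fixpoint telems (t : trie) : seq word :=
  if t is Node b t0 t1 t2 then
    nseq b [::] ++ map (cons A0) (telems t0) ++ map (cons A1) (telems t1)
      ++ map (cons A2) (telems t2)
  else [::].

(* Direct traversals computing [all f (telems t)] and [foldl g acc (telems t)];
   under the kernel's lazy reduction they are much faster than going through
   the list [telems t]. *)
Fixpoint tall (f : pred word) (t : trie) : bool :=
  if t is Node b t0 t1 t2 then
    [&& b ==> f [::], tall (f \o cons A0) t0, tall (f \o cons A1) t1
      & tall (f \o cons A2) t2]
  else true.

Fixpoint tfoldl (T : Type) (g : T -> word -> T) (acc : T) (t : trie) : T :=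
  if t is Node b t0 t1 t2 then
    let acc := if b then g acc [::] else acc in
    let acc := tfoldl (fun a k => g a (A0 :: k)) acc t0 in
    let acc := tfoldl (fun a k => g a (A1 :: k)) acc t1 in
    tfoldl (fun a k => g a (A2 :: k)) acc t2
  else acc.

Lemma tmem_ins t k k' : tmem (tins t k) k' = (k' == k) || tmem t k'.
Proof.
elim: k t k' => [|d k IH] [|b t0 t1 t2] [|d' k'] //=.
all: try by case: d'.
all: try by case: d.
all: by case: d; case: d'; rewrite /= ?IH ?orbF.
Qed.

Lemma mem_cons_map (T : eqType) (a d : T) (k : seq T) ks :
  (d :: k \in map (cons a) ks) = (d == a) && (k \in ks).
Proof. by apply/mapP/andP=> [[k' k'ks [-> ->]] | [/eqP -> kks]]; last exists k. Qed.

Lemma nil_notin_map_cons (T : eqType) (a : T) ks : ([::] \in map (cons a) ks) = false.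
Proof. by apply/mapP=> -[]. Qed.

Lemma mem_telems t k : (k \in telems t) = tmem t k.
Proof.
elim: t k => [|b t0 IH0 t1 IH1 t2 IH2] [|d k] //=; rewrite !mem_cat.
  by rewrite !nil_notin_map_cons !orbF; case: b.
have -> : (d :: k \in nseq b [::]) = false by case: b.
by rewrite !mem_cons_map; case: d; rewrite /= ?orbF.
Qed.

Lemma tallE f t : tall f t = all f (telems t).
Proof.
elim: t f => [|b t0 IH0 t1 IH1 t2 IH2] f //=.
by rewrite !all_cat !all_map -IH0 -IH1 -IH2; case: b; rewrite /= ?andbT.
Qed.

Lemma foldl_map T1 T2 R (h : T1 -> T2) (g : R -> T2 -> R) acc s :
  foldl g acc (map h s) = foldl (fun a x => g a (h x)) acc s.
Proof. by elim: s acc => /=. Qed.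

Lemma tfoldlE T (g : T -> word -> T) acc t : tfoldl g acc t = foldl g acc (telems t).
Proof.
elim: t g acc => [|b t0 IH0 t1 IH1 t2 IH2] g acc //=.
by rewrite !foldl_cat !foldl_map -IH0 -IH1 -IH2; case: b.
Qed.

Definition extend_level (c : word) (prev cur : trie) : trie :=
  tfoldl (fun T s => tins (tins T (vadd c s)) (vadd (vscale A2 c) s)) cur prev.

Definition add_column (c : word) (Ss : seq trie) : seq trie :=
  if Ss is S0 :: Ss' then S0 :: pairmap (extend_level c) S0 Ss' else [::].

(* One pass computes both the check and the levels, so that each level is
   built only once.  Level w <= t of [syndrome_levels t r cs] contains the
   syndromes [lincomb r z cs] of all words z of weight at most w. *)
Fixpoint distance_scan (t r : nat) (cs : seq word) : bool * seq trie :=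
  if cs is c :: cs' then
    let: (ok, Ss) := distance_scan t r cs' in
    let S := nth Leaf Ss t in
    (ok && tall (fun s => ~~ tmem S (vadd c s)) S, add_column c Ss)
  else (true, nseq t.+1 (tins Leaf (nseq r A0))).

Definition syndrome_levels t r cs : seq trie := (distance_scan t r cs).2.

Definition min_weight_check t r cs : bool := (distance_scan t r cs).1.

Lemma tmem_extend_level c prev cur k : tmem (extend_level c prev cur) k =
  has (fun s => (k == vadd c s) || (k == vadd (vscale A2 c) s)) (telems prev)
  || tmem cur k.
Proof.
rewrite /extend_level tfoldlE; elim: (telems prev) cur => //= s ss IH cur.
rewrite IH !tmem_ins; case: (k == vadd c s); case: (k == vadd _ s).
all: by rewrite /= ?orbT ?orbF.
Qed.

Lemma syndrome_levels_cons t r c cs :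
  syndrome_levels t r (c :: cs) = add_column c (syndrome_levels t r cs).
Proof. by rewrite /syndrome_levels /=; case: distance_scan. Qed.

Lemma min_weight_check_cons t r c cs :
  min_weight_check t r (c :: cs) =
  min_weight_check t r cs &&
  (let S := nth Leaf (syndrome_levels t r cs) t in
   all (fun s => ~~ tmem S (vadd c s)) (telems S)).
Proof. by rewrite /min_weight_check /syndrome_levels /= -tallE; case: distance_scan. Qed.

Lemma size_syndrome_levels t r cs : size (syndrome_levels t r cs) = t.+1.
Proof.
elim: cs => [|c cs IH]; first by rewrite size_nseq.
rewrite syndrome_levels_cons.
by case: syndrome_levels IH => //= S0 Ss; rewrite size_pairmap.
Qed.

Lemma syndrome_levels_complete t r cs z w : w <= t -> all_size r cs ->
  size z = size cs -> wt z <= w ->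
  tmem (nth Leaf (syndrome_levels t r cs) w) (lincomb r z cs).
Proof.
elim: cs z w => [|c cs IH] [|x z] w // w_le_t.
  by move=> _ _ _ /=; rewrite nth_nseq ltnS w_le_t tmem_ins eqxx.
case/andP=> /eqP cr rcs [zcs]; rewrite syndrome_levels_cons.
have := size_syndrome_levels t r cs.
case E: syndrome_levels => [|S0 Ss] // [Sst].
have IH_levels w' : w' <= t -> wt z <= w' ->
    tmem (nth Leaf (S0 :: Ss) w') (lincomb r z cs).
  by rewrite -E; move=> ? ?; apply: IH.
case: (eqVneq x A0) => [->|x0] wz.
  rewrite lincomb0_cons //; case: w w_le_t wz => [|w] w_le_t wz /=.
    exact: (IH_levels 0).
  rewrite (nth_pairmap Leaf) ?Sst // tmem_extend_level; apply/orP; right.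
  exact: (IH_levels w.+1).
case: w w_le_t wz => [|w] w_le_t; first by rewrite /wt /= x0.
rewrite /wt /= x0 add1n ltnS -/(wt z) => wz.
rewrite (nth_pairmap Leaf) ?Sst // tmem_extend_level; apply/orP; left.
apply/hasP; exists (lincomb r z cs); first by rewrite mem_telems IH_levels ?(ltnW w_le_t).
by case: x x0 {wz}; rewrite ?vscale1 eqxx ?orbT.
Qed.

Lemma min_weight_checkP t r cs z : min_weight_check t r cs -> all_size r cs ->
  size z = size cs -> lincomb r z cs = nseq r A0 -> has (predC1 A0) z ->
  t.*2.+2 <= wt z.
Proof.
elim: cs z => [|c cs IH] [|x z] //; rewrite min_weight_check_cons.
case/andP=> ok /allP no_hit /andP[/eqP cr rcs] [zcs].
case: (eqVneq x A0) => [->|x0].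
  by rewrite lincomb0_cons // => /IH; apply.
move=> synd0 _; rewrite leqNgt; apply/negP.
rewrite /wt /= x0 add1n ltnS -/(wt z) -addnn -(wt_vscale z x0) => /wt_split.
case=> [a [b [az bz abz wa wb]]]; rewrite size_map in az bz.
set S := nth Leaf _ t in no_hit.
have Sa : lincomb r a cs \in telems S.
  by rewrite mem_telems; apply: syndrome_levels_complete; rewrite ?az.
have := no_hit _ Sa; rewrite (lincomb_cons_eq0 x0 cr rcs zcs az bz abz synd0).
by rewrite syndrome_levels_complete ?size_map ?bz ?wt_vscale.
Qed.

Local Open Scope ring_scope.

Definition to_F3 (a : t3) : F3 := match a with A0 => 0 | A1 => 1 | A2 => 2%:R end.
Definition of_F3 (a : F3) : t3 := match val a with 0 => A0 | 1 => A1 | _ => A2 end.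

Lemma of_F3K : cancel of_F3 to_F3.
Proof. by case=> [[|[|[|m]]] lt_m3] //; apply: val_inj. Qed.

Lemma to_F3_inj : injective to_F3.
Proof. by do 2 case. Qed.

Lemma to_F3_add a b : to_F3 (add3 a b) = to_F3 a + to_F3 b.
Proof. by case: a; case: b; apply: val_inj. Qed.

Lemma to_F3_mul a b : to_F3 (mul3 a b) = to_F3 a * to_F3 b.
Proof. by case: a; case: b; apply: val_inj. Qed.

Lemma to_F3_eq0 a : (to_F3 a == 0) = (a == A0).
Proof. by case: a. Qed.

Lemma to_F3_dot n u v : size u = n -> size v = n ->
  to_F3 (dot u v) = \sum_(j < n) to_F3 (nth A0 u j) * to_F3 (nth A0 v j).
Proof.
elim: n u v => [|n IH] [|x u] [|y v] //=; first by rewrite big_ord0.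
by move=> [un] [vn]; rewrite big_ord_recl to_F3_add to_F3_mul IH.
Qed.

Definition mxF3 m n (A : seq word) : 'M[F3]_(m, n) :=
  \matrix_(i, j) to_F3 (nth A0 (nth [::] A i) j).

Definition wf_mx m n (A : seq word) : bool := (size A == m) && all_size n A.

Definition lmulmx p (A B : seq word) : seq word := [seq lincomb p a B | a <- A].

Definition ltrmx n (A : seq word) : seq word := [seq column j A | j <- iota 0 n].

Definition lidmx n : seq word :=
  [seq [seq if i == j then A1 else A0 | j <- iota 0 n] | i <- iota 0 n].

Lemma wf_mx_row m n A (i : 'I_m) : wf_mx m n A -> size (nth [::] A i) = n.
Proof. by case/andP=> /eqP Am /allP An; apply/eqP/An; rewrite mem_nth ?Am. Qed.

Lemma wf_mx_lmulmx m n p A B :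
  wf_mx m n A -> wf_mx n p B -> wf_mx m p (lmulmx p A B).
Proof.
case/andP=> /eqP Am _ /andP[_ Bp]; rewrite /wf_mx size_map Am eqxx /=.
by apply/allP=> _ /mapP[a _ ->]; rewrite size_lincomb.
Qed.

Lemma wf_mx_ltrmx m n A : wf_mx m n A -> wf_mx n m (ltrmx n A).
Proof.
case/andP=> /eqP Am _; rewrite /wf_mx size_map size_iota eqxx /=.
by apply/allP=> _ /mapP[j _ ->]; rewrite size_map Am.
Qed.

Lemma mxF3_mul m n p A B : wf_mx m n A -> wf_mx n p B ->
  mxF3 m n A *m mxF3 n p B = mxF3 m p (lmulmx p A B).
Proof.
move=> wfA wfB; have /andP[/eqP Am _] := wfA; have /andP[/eqP Bn Bp] := wfB.
apply/matrixP=> i l; have Ai := wf_mx_row i wfA.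
rewrite !mxE (nth_map [::]) ?Am // nth_lincomb ?Bn ?Ai //.
rewrite (to_F3_dot (n := n)) ?Ai ?size_map //; apply: eq_bigr => j _.
by rewrite !mxE (nth_map [::]) ?Bn.
Qed.

Lemma mxF3_tr m n A : size A = m -> mxF3 n m (ltrmx n A) = (mxF3 m n A)^T.
Proof.
move=> Am; apply/matrixP=> j i; rewrite !mxE (nth_map 0%N) ?size_iota //.
by rewrite nth_iota // (nth_map [::]) ?Am.
Qed.

Lemma mxF3_lidmx n : mxF3 n n (lidmx n) = 1%:M.
Proof.
apply/matrixP=> i j.
rewrite !mxE (nth_map 0%N) ?size_iota // (nth_map 0%N) ?size_iota //.
by rewrite !nth_iota // -[(_ == _)%N]/(i == j); case: eqVneq.
Qed.

Lemma mxF3_zero m n : mxF3 m n (nseq m (nseq n A0)) = 0.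
Proof. by apply/matrixP=> i j; rewrite !mxE !nth_nseq ltn_ord nth_nseq if_same. Qed.

Lemma mxF3_inj m n A B : wf_mx m n A -> wf_mx m n B ->
  mxF3 m n A = mxF3 m n B -> A = B.
Proof.
move=> wfA wfB /matrixP AB.
have /andP[/eqP Am _] := wfA; have /andP[/eqP Bm _] := wfB.
apply: (@eq_from_nth _ [::]) => [|i]; first by rewrite Am Bm.
rewrite Am => im; pose i' := Ordinal im; have Ai := wf_mx_row i' wfA.
apply: (@eq_from_nth _ A0) => [|j]; first by rewrite Ai (wf_mx_row i' wfB).
rewrite Ai => jn; apply: to_F3_inj.
by have := AB i' (Ordinal jn); rewrite !mxE.
Qed.

Definition word_of_row n (x : 'rV[F3]_n) : word := [seq of_F3 (x 0 j) | j <- enum 'I_n].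

Lemma size_word_of_row n (x : 'rV[F3]_n) : size (word_of_row x) = n.
Proof. by rewrite size_map size_enum_ord. Qed.

Lemma word_of_rowK n (x : 'rV[F3]_n) : mxF3 1 n [:: word_of_row x] = x.
Proof.
apply/matrixP=> i j; rewrite (ord1 i) mxE /= (nth_map j) ?size_enum_ord //.
by rewrite nth_ord_enum of_F3K.
Qed.

Lemma row_mxF3 m n A (i : 'I_m) : row i (mxF3 m n A) = mxF3 1 n [:: nth [::] A i].
Proof. by apply/matrixP=> i' j; rewrite (ord1 i') !mxE. Qed.

Lemma card_nth_count (T : eqType) (x0 : T) (P : pred T) (s : seq T) n :
  size s = n -> #|[set j : 'I_n | P (nth x0 s j)]| = count P s.
Proof. by move=> <-; rewrite cardsE -sum1_card -sum1_count (big_nth x0) big_mkord. Qed.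

Lemma hwt_mxF3 n z : size z = n -> hwt (mxF3 1 n [:: z]) = wt z.
Proof.
move=> zn; rewrite /hwt /wt -(card_nth_count A0 (predC1 A0) zn).
by apply: eq_card => j; rewrite !inE mxE /= to_F3_eq0.
Qed.

Lemma word_of_row_syndrome n r (H : seq word) (x : 'rV[F3]_n) : wf_mx n r H ->
  x *m mxF3 n r H = 0 -> lincomb r (word_of_row x) H = nseq r A0.
Proof.
move=> wfH xH.
have wfx : wf_mx 1 n [:: word_of_row x] by rewrite /wf_mx /= size_word_of_row eqxx.
have wf0 : wf_mx 1 r [:: nseq r A0] by rewrite /wf_mx /= size_nseq eqxx.
suff [] : lmulmx r [:: word_of_row x] H = [:: nseq r A0] by [].
apply: mxF3_inj (wf_mx_lmulmx wfx wfH) wf0 _.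
by rewrite -(mxF3_mul wfx wfH) word_of_rowK xH -(mxF3_zero 1 r).
Qed.

Lemma word_of_row_neq0 n (x : 'rV[F3]_n) : x != 0 -> has (predC1 A0) (word_of_row x).
Proof.
apply: contraNT => /hasPn x0; apply/eqP/matrixP=> i j.
rewrite (ord1 i) mxE -[x 0 j]of_F3K.
by have /negPn/eqP -> := x0 _ (map_f _ (mem_enum _ j)).
Qed.

Lemma min_weight_mxF3 n r t (H : seq word) (x : 'rV[F3]_n) :
  wf_mx n r H -> min_weight_check t r H -> x *m mxF3 n r H = 0 -> x != 0 ->
  (t.*2.+2 <= hwt x)%N.
Proof.
move=> wfH ok xH x0; have /andP[/eqP Hn Hr] := wfH.
rewrite -(word_of_rowK x) hwt_mxF3 ?size_word_of_row //.
apply: min_weight_checkP ok Hr _ (word_of_row_syndrome wfH xH) (word_of_row_neq0 x0).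
by rewrite size_word_of_row.
Qed.

(* [H] is an n x r matrix with G H = 0 (a transposed parity-check matrix) and
   [M] is the inverse of the Gram matrix G G^T. *)
Definition lcd_certificate n k r t (G H M : seq word) : bool :=
  [&& wf_mx k n G, wf_mx n r H, wf_mx k k M, (0 < k)%N,
      lmulmx r G H == nseq k (nseq r A0),
      lmulmx k (lmulmx k G (ltrmx n G)) M == lidmx k,
      wt (nth [::] G 0) == t.*2.+2 & min_weight_check t r H].

Lemma lcd_certificateP n k r t G H M : lcd_certificate n k r t G H M ->
  ternary_code_params n k t.*2.+2 (mxF3 k n G) /\ euclidean_LCD (mxF3 k n G).
Proof.
case/and4P=> wfG wfH wfM /and5P[k_gt0 /eqP GH0 /eqP gramM /eqP wtG0 ok].
have wfGGt := wf_mx_lmulmx wfG (wf_mx_ltrmx wfG).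
have gram_inv : mxF3 k n G *m (mxF3 k n G)^T *m mxF3 k k M = 1%:M.
  have /andP[/eqP Gk _] := wfG.
  by rewrite -mxF3_tr // !mxF3_mul // ?wf_mx_ltrmx // gramM mxF3_lidmx.
have [gram_unit _] := mulmx1_unit gram_inv.
split; last exact: euclidean_LCD_gram_unit.
apply: (ternary_code_params_kernel (H := mxF3 n r H) (i := Ordinal k_gt0)) => //.
- exact: rank_gram_unit.
- by rewrite mxF3_mul // GH0 mxF3_zero.
- by rewrite row_mxF3 hwt_mxF3 ?(wf_mx_row (Ordinal k_gt0) wfG).
- by move=> x; apply: min_weight_mxF3.
Qed.

Local Close Scope ring_scope.

Definition digit (c : ascii) : t3 :=
  if Ascii.eqb c "1" then A1 else if Ascii.eqb c "2" then A2 else A0.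

Fixpoint word_of_string (s : string) : word :=
  if s is String c s' then digit c :: word_of_string s' else [::].

Local Open Scope string_scope.

Definition G37 : seq word := map word_of_string [::
  "0000000000000000012100002000010000212";
  "2220012012000111000000000000000000000";
  "1002022222200200100000000000000000000";
  "1221211000010120001000000000000000000";
  "1000012211122100000100000000000000000";
  "0100001221112210000010000000000000000";
  "1120021110111110000001000000000000000";
  "1222020102011000000000100000000000000";
  "0122202010201100000000010000000000000";
  "2000102000111120000000001000000000000";
  "0102110110220210000000000100000000000";
  "2102020200201200000000000010000000000";
  "0210202020020120000000000001000000000";
  "1202211010120100000000000000100000000";
  "2111100200100020000000000000010000000";
  "0110210200222100000000000000001000000";
  "2002200122110220000000000000000100000";
  "1111111120002110000000000000000010000";
  "2200220001212120000000000000000001000";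
  "1101210111212000000000000000000000100";
  "2101000110212210000000000000000000010";
  "1020121002021110000000000000000000001"].

Definition H37 : seq word := map word_of_string [::
  "200100111111001";
  "121222020120220";
  "012122202012022";
  "200000211222112";
  "222121012110121";
  "211100102010220";
  "021110010201022";
  "201202022011012";
  "222211220222011";
  "120100101001021";
  "110222022112222";
  "210110220202102";
  "220102010011120";
  "022010201001112";
  "201022011121021";
  "121011210121222";
  "211222112000002";
  "220210202221210";
  "022021020222121";
  "100111111001002";
  "212102102121010";
  "021210210212101";
  "100000000000000";
  "010000000000000";
  "001000000000000";
  "000100000000000";
  "000010000000000";
  "000001000000000";
  "000000100000000";
  "000000010000000";
  "000000001000000";
  "000000000100000";
  "000000000010000";
  "000000000001000";
  "000000000000100";
  "000000000000010";
  "000000000000001"].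

Definition M37 : seq word := map word_of_string [::
  "2201001000102201221010";
  "2212111221201002111010";
  "0122102212211201121110";
  "1220011012102201112110";
  "0110121221101111211012";
  "0101200101002000120011";
  "1121101200022221020202";
  "0220212222222222221010";
  "0211200210220022010102";
  "0122110201111120011022";
  "1221100221120010200002";
  "0010002221222201111222";
  "2112122201021001200200";
  "2022102201020112020102";
  "0000102222100122011221";
  "1211101220011221000202";
  "2111210200212000002010";
  "2121122211010210011202";
  "1112100101010010211020";
  "0011002010022122020210";
  "1111110102020020102101";
  "0000212022220212020012"].

Definition G40 : seq word := map word_of_string [::
  "0000000000000000000000000001001200000121";
  "2102002112110000000000000000000000000000";
  "0011020121201000000000000000000000000000";
  "0111112211200100000000000000000000000000";
  "0121121120200010000000000000000000000000";
  "0000222120200001000000000000000000000000";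
  "2102021021100000100000000000000000000000";
  "0011022012100000010000000000000000000000";
  "2210111212100000001000000000000000000000";
  "1000112121200000000100000000000000000000";
  "2202010021200000000010000000000000000000";
  "1222022100000000000001000000000000000000";
  "2111221120000000000000100000000000000000";
  "1222100202000000000000010000000000000000";
  "2111202200200000000000001000000000000000";
  "0021100122100000000000000100000000000000";
  "2122222102200000000000000010000000000000";
  "0100021020200000000000000000100000000000";
  "2112001211100000000000000000010000000000";
  "2020211120200000000000000000001000000000";
  "2210211011000000000000000000000100000000";
  "0102121210200000000000000000000010000000";
  "1012000222200000000000000000000001000000";
  "1011121202200000000000000000000000100000";
  "0211122022000000000000000000000000010000";
  "1002120022200000000000000000000000001000";
  "1102000100100000000000000000000000000100";
  "0211020220000000000000000000000000000010";
  "1002110112000000000000000000000000000001"].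

Definition H40 : seq word := map word_of_string [::
  "11121010000";
  "01112101000";
  "00111210100";
  "10020112100";
  "00001112101";
  "11121121210";
  "01112112121";
  "11202221212";
  "20002212121";
  "10121201212";
  "20221110121";
  "10110121012";
  "20220002101";
  "10110010210";
  "01011001021";
  "11222110102";
  "20001201010";
  "02000120101";
  "11021022010";
  "01102102201";
  "11201220220";
  "01120122022";
  "22021002202";
  "21111120220";
  "02111112022";
  "22120101202";
  "21121000120";
  "02112100012";
  "22120200001";
  "10000000000";
  "01021200200";
  "00100000000";
  "00010000000";
  "00001000000";
  "00000100000";
  "00000010000";
  "00000001000";
  "00000000100";
  "00000000010";
  "00000000001"].

Definition M40 : seq word := map word_of_string [::
  "10010020110011002001021201102";
  "00102112200112110100111101202";
  "01100000200212020011111211212";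
  "10011102220122021021020012010";
  "02012212102102222111202220020";
  "01012121112010000122012201202";
  "21001200210220212221121211000";
  "02022101220102122112211110110";
  "12221122112220212020212121200";
  "10020112111020120222210021201";
  "00002200210002221012020001001";
  "01211021200112111210100112122";
  "11120120220100021222200112110";
  "12222002002201021202021211210";
  "01002021212100010001201020210";
  "01222012122122122011020011010";
  "20012022201111021201112201102";
  "01001121020222002221101211212";
  "00121221221120010211110100000";
  "10111212022022111110200012112";
  "01102012220120201112100100101";
  "21120121112002021010011021102";
  "11102211200001102100010111201";
  "21202221100112002210101112221";
  "00112011220111210101021100112";
  "11120110111221011102011202122";
  "12200201220112201201112211102";
  "00112001000211110101000212010";
  "22200200011200002202121122200"].

Lemma certificate37 : lcd_certificate 37 22 15 3 G37 H37 M37.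
Proof. by vm_compute. Qed.

Lemma certificate40 : lcd_certificate 40 29 11 2 G40 H40 M40.
Proof. by vm_compute. Qed.

Theorem proposition5p8 :
  (exists G : 'M['F_3]_(22, 37),
      ternary_code_params 37 22 8 G /\ euclidean_LCD G) /\
  (exists G : 'M['F_3]_(29, 40),
      ternary_code_params 40 29 6 G /\ euclidean_LCD G).
Proof.
split; [exists (mxF3 22 37 G37) | exists (mxF3 29 40 G40)].
- exact: lcd_certificateP certificate37.
- exact: lcd_certificateP certificate40.
Qed.
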